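(* Consider an instance of the ranking with submodular valuations problem: a ground set $[m]=\{1,\dots,m\}$, $n$ normalized monotone submodular functions $f^1,\dots,f^n:2^{[m]}\to\mathbb{R}_+$ (given by value oracles), and a weight vector $w\in\mathbb{R}_+^n$. Let $\epsilon=\min\{f^i_S(j) : i\in[n],\ S\subseteq[m],\ j\in[m],\ f^i_S(j)>0\}$, where $f^i_S(j)=f^i(S\cup\{j\})-f^i(S)$. Then the linear ordering produced by the Adaptive Residual Updates algorithm (described below) has cost at most $O(\ln(1/\epsilon))$ times the cost of an optimal linear ordering.
   Context: A set function $f:2^{[m]}\to\mathbb{R}$ is submodular if $f(S)+f(T)\ge f(S\cup T)+f(S\cap T)$ for all $S,T\subseteq[m]$; normalized means $f(\emptyset)=0$; monotone means $f(S)\le f(T)$ whenever $S\subseteq T$. A linear ordering is a bijection $\pi:[m]\to[m]$, where $\pi(t)$ is the element placed at position $t$. The cover time $c_i$ of $f^i$ under $\pi$ is the minimal index $c$ with $f^i(\{\pi(1),\dots,\pi(c)\})\ge 1$ (it is assumed that $f^i([m])\ge1$ for every $i$, so cover times exist). The cost of $\pi$ is $\sum_{i=1}^n w_i c_i$, and the problem asks for an ordering of minimum cost. Adaptive Residual Updates algorithm: start with $S=\emptyset$. For $t=1,\dots,m$: for every $i\in[n]$ and every $j\in[m]\setminus S$ set $P_{ij}=0$ if $f^i(S)\ge 1$, and otherwise $P_{ij}=\min\{1,\ (f^i(S\cup\{j\})-f^i(S))/(1-f^i(S))\}$; then choose $j\in[m]\setminus S$ maximizing $\sum_{i=1}^n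 w_iP_{ij}$, set $S\leftarrow S\cup\{j\}$ and $\pi(t)=j$. *)

From HB Require Import structures.
From mathcomp Require Import all_boot all_order all_algebra all_fingroup.
From mathcomp Require Import all_classical all_reals all_analysis.
Set Implicit Arguments. Unset Strict Implicit. Unset Printing Implicit Defensive.
Import Order.TTheory GRing.Theory Num.Theory.
Local Open Scope ring_scope.

Section Ranking.
Variables (R : realType) (m : nat).

Definition sf_normalized (g : {set 'I_m} -> R) := g finset.set0 = 0.
Definition sf_monotone (g : {set 'I_m} -> R) := forall S T : {set 'I_m}, S \subset T -> g S <= g T.
Definition sf_submodular (g : {set 'I_m} -> R) :=
  forall S T : {set 'I_m}, g S + g T >= g (S :|: T) + g (S :&: T).
Definition sf_nonneg (g : {set 'I_m} -> R) := forall S, 0 <= g S.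

Definition marginal (g : {set 'I_m} -> R) (S : {set 'I_m}) (j : 'I_m) :=
  g (S :|: [set j]) - g S.

(* positions are 0-indexed: pi t is the element at position t+1.
   sf_prefix pi c = {pi(1),...,pi(c)} in the paper's 1-indexed notation. *)
Definition sf_prefix (pi : {perm 'I_m}) (c : nat) : {set 'I_m} :=
  [set pi t | t : 'I_m & (t < c)%N].

(* cover time: the minimal c in {0,...,m} with g(sf_prefix c) >= 1
   (found by linear search; equals m.+1 if there is none). *)
Definition cover_time (g : {set 'I_m} -> R) (pi : {perm 'I_m}) : nat :=
  find (fun c => 1 <= g (sf_prefix pi c)) (iota 0 m.+1).

Definition cost (n : nat) (f : 'I_n -> {set 'I_m} -> R) (w : 'I_n -> R)
  (pi : {perm 'I_m}) : R :=
  \sum_(i < n) w i * (cover_time (f i) pi)%:R.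

Definition aru_P (g : {set 'I_m} -> R) (S : {set 'I_m}) (j : 'I_m) : R :=
  if 1 <= g S then 0 else Num.min 1 (marginal g S j / (1 - g S)).

Definition aru_score (n : nat) (f : 'I_n -> {set 'I_m} -> R) (w : 'I_n -> R)
  (S : {set 'I_m}) (j : 'I_m) : R :=
  \sum_(i < n) w i * aru_P (f i) S j.

(* pi is an output of the Adaptive Residual Updates algorithm (under some
   tie-breaking rule): at every step t, the chosen element pi t maximizes
   the score among the elements not yet chosen. *)
Definition aru_output (n : nat) (f : 'I_n -> {set 'I_m} -> R) (w : 'I_n -> R)
  (pi : {perm 'I_m}) : Prop :=
  forall (t : 'I_m) (j : 'I_m), j \notin sf_prefix pi t ->
    aru_score f w (sf_prefix pi t) j <= aru_score f w (sf_prefix pi t) (pi t).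

End Ranking.

From HB Require Import structures.
From mathcomp Require Import all_boot all_order all_algebra all_fingroup.
From mathcomp Require Import all_classical all_reals all_analysis.
From mathcomp Require Import ring lra.
(* Re-imported so that the finset names (set0, subsetP, ...) shadow those of classical_sets. *)
From mathcomp Require Import fintype finset.
Set Implicit Arguments. Unset Strict Implicit. Unset Printing Implicit Defensive.
Import Order.TTheory GRing.Theory Num.Theory.
Local Open Scope ring_scope.

(* Let R_pi(t) (resp. R_sigma(k)) be the weight of the functions not covered by the
   first t elements of pi (resp. the first k elements of sigma), so that the cost of an
   ordering is the sum of its uncovered weights, and let score(t) be the score of the
   element chosen at step t.  A function uncovered by pi at step t but covered by the
   first k elements of sigma puts residual mass P at least one on these elements, so the
   greedy choice gives R_pi(t) - R_sigma(k) <= k score(t).  With k(t) the first k such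
   that 2 R_sigma(k) <= R_pi(t) this yields R_pi(t) <= 2 k(t) score(t), and exchanging
   sums, cost(pi) <= 2 sum_i w_i k(c_i - 1) sum_t P_i(t), where c_i is the cover time of
   f^i under pi.  Along pi the potential max(0, 1 + ln(r / eps)) of the residual
   r = 1 - f^i(prefix) drops by at least P_i(t) at each step, because every increment of
   f^i is 0 or at least eps; hence sum_t P_i(t) <= 2 + ln(1/eps).  Finally
   sum_i w_i k(c_i - 1) <= 2 sum_k R_sigma(k) = 2 cost(sigma), since k < k(c_i - 1)
   forces f^i to be uncovered at the first step t0 with k < k(t0). *)

Section Potential.
Variable R : realType.

Definition potential (eps r : R) : R := Num.max 0 (1 + ln (r / eps)).

Lemma potential_ge0 eps r : 0 <= potential eps r.
Proof. by rewrite le_max lexx. Qed.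

Lemma potential_drop eps r r' : 0 < eps -> 0 < r' ->
  r' = r \/ eps <= r - r' ->
  Num.min 1 ((r - r') / r) + potential eps r' <= potential eps r.
Proof.
move=> eps_gt0 r'_gt0 [-> | gap].
  by rewrite subrr mul0r min_r // add0r.
have r_gt0 : 0 < r by lra.
have lnr_gt0 : 0 < ln (r / eps) by apply: ln_gt0; rewrite ltr_pdivlMr // mul1r; lra.
have min_le1 : Num.min 1 ((r - r') / r) <= 1 by rewrite ge_min lexx.
have min_le : Num.min 1 ((r - r') / r) <= (r - r') / r by rewrite ge_min lexx orbT.
rewrite [potential eps r]/potential max_r; last lra.
rewrite /potential; case: (leP 0 (1 + ln (r' / eps))) => [pot'_ge0|]; last lra.
(* [ln (1 - x) <= - x] with [x = (r - r') / r] *)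
have : ln (r' / eps) - ln (r / eps) <= - ((r - r') / r).
  rewrite -ln_div ?posrE ?divr_gt0 //.
  have -> : r' / eps / (r / eps) = 1 + - ((r - r') / r) by field; rewrite ?gt_eqF.
  apply: le_ln1Dx; rewrite ltrN2 ltr_pdivrMr // mul1r; lra.
lra.
Qed.

Lemma sum_residual_ratio_le (eps : R) (c : nat) (a : nat -> R) : 0 < eps ->
  (forall t, (t < c)%N -> a t < 1) ->
  (forall t, (t < c)%N -> a t.+1 = a t \/ eps <= a t.+1 - a t) ->
  \sum_(t < c) Num.min 1 ((a t.+1 - a t) / (1 - a t)) <= 1 + potential eps (1 - a 0%N).
Proof.
move=> eps_gt0; elim: c a => [|c IH] a a_lt1 a_step.
  by rewrite big_ord0; have := potential_ge0 eps (1 - a 0%N); lra.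
rewrite big_ord_recl.
have min_le1 : Num.min 1 ((a 1%N - a 0%N) / (1 - a 0%N)) <= 1 by rewrite ge_min lexx.
case: c IH a_lt1 a_step => [|c] IH a_lt1 a_step.
  by rewrite big_ord0 addr0; have := potential_ge0 eps (1 - a 0%N); lra.
have IHa := IH (fun t => a t.+1) (fun t ht => a_lt1 t.+1 ht) (fun t ht => a_step t.+1 ht).
have drop : Num.min 1 ((a 1%N - a 0%N) / (1 - a 0%N)) + potential eps (1 - a 1%N)
              <= potential eps (1 - a 0%N).
  have -> : a 1%N - a 0%N = 1 - a 0%N - (1 - a 1%N) by ring.
  apply: potential_drop => //; first by rewrite subr_gt0; exact: a_lt1.
  by case: (a_step 0%N isT) => [->|]; [left | right; lra].
lra.
Qed.

Lemma potential1_le (eps : R) :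
  1 + potential eps 1 <= 3 * Num.max 1 (ln eps^-1).
Proof.
have le1M : 1 <= Num.max 1 (ln eps^-1) by rewrite le_max lexx.
have leLM : ln eps^-1 <= Num.max 1 (ln eps^-1) by rewrite le_max lexx orbT.
by rewrite /potential div1r; case: (leP 0 (1 + ln eps^-1)); lra.
Qed.

End Potential.

Lemma find_iota_spec (P : pred nat) (m : nat) : P m ->
  let k := find P (iota 0 m.+1) in
  [/\ (k <= m)%N, P k & forall k', (k' < k)%N -> ~~ P k'].
Proof.
move=> Pm k.
have hasP : has P (iota 0 m.+1).
  by apply/hasP; exists m; rewrite // mem_iota add0n ltnSn.
have k_lt : (k < m.+1)%N by rewrite -(size_iota 0 m.+1) -has_find.
split => //; first by have := nth_find 0 hasP; rewrite nth_iota.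
move=> k' lt_k'k; have := before_find 0 lt_k'k.
by rewrite nth_iota ?add0n => [->|]; last exact: ltn_trans k_lt.
Qed.

Section Prefix.
Variables (m : nat) (p : {perm 'I_m}).

Lemma mem_sf_prefix (t : 'I_m) c : (p t \in sf_prefix p c) = (t < c)%N.
Proof.
apply/imsetP/idP => [[u]|lt_tc]; last by exists t; rewrite ?inE.
by rewrite inE => lt_uc /perm_inj ->.
Qed.

Lemma sf_prefix_subset c c' : (c <= c')%N -> sf_prefix p c \subset sf_prefix p c'.
Proof.
move=> le_cc'; apply/subsetP => j /imsetP [u]; rewrite inE => lt_uc ->.
by rewrite mem_sf_prefix (leq_trans lt_uc).
Qed.

Lemma sf_prefix0 : sf_prefix p 0 = set0.
Proof. by apply/setP => j; rewrite inE -(permKV p j) mem_sf_prefix ltn0. Qed.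

Lemma sf_prefix_full : sf_prefix p m = [set: 'I_m].
Proof. by apply/setP => j; rewrite inE -(permKV p j) mem_sf_prefix ltn_ord. Qed.

Lemma sf_prefixS (t : 'I_m) : sf_prefix p t.+1 = sf_prefix p t :|: [set p t].
Proof.
apply/setP => j; rewrite !inE -(permKV p j) !mem_sf_prefix (inj_eq perm_inj).
by rewrite ltnS leq_eqVlt orbC.
Qed.

Lemma big_sf_prefix (R : realType) (F : 'I_m -> R) c :
  \sum_(j in sf_prefix p c) F j = \sum_(u < m | (u < c)%N) F (p u).
Proof.
rewrite big_imset; last by move=> x y _ _ /perm_inj.
by apply: eq_bigl => u; rewrite inE.
Qed.

End Prefix.

Lemma min1_sum_le (R : realType) (I : finType) (P : pred I) (x : I -> R) :
  (forall i, 0 <= x i) ->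
  Num.min 1 (\sum_(i | P i) x i) <= \sum_(i | P i) Num.min 1 (x i).
Proof.
move=> x_ge0.
suff [] : 0 <= \sum_(i | P i) x i /\
  Num.min 1 (\sum_(i | P i) x i) <= \sum_(i | P i) Num.min 1 (x i) by [].
apply: (big_ind2 (fun a b => 0 <= a /\ Num.min 1 a <= b)) => //.
move=> a1 b1 a2 b2 [a1_ge0 le1] [a2_ge0 le2]; split; first exact: addr_ge0.
suff : Num.min 1 (a1 + a2) <= Num.min 1 a1 + Num.min 1 a2 by lra.
by case: (leP a1 1); case: (leP a2 1); case: (leP (a1 + a2) 1); lra.
Qed.

Section SetFunction.
Variables (R : realType) (m : nat) (g : {set 'I_m} -> R).
Implicit Types (S T A : {set 'I_m}) (j : 'I_m).
Hypothesis g_mono : sf_monotone g.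

Lemma marginal_ge0 S j : 0 <= marginal g S j.
Proof. by rewrite subr_ge0; apply/g_mono/subsetUl. Qed.

Lemma aru_P_ge0 S j : 0 <= aru_P g S j.
Proof.
rewrite /aru_P; case: ifPn => // /negP g_lt1; rewrite le_min ler01 /=.
by rewrite divr_ge0 ?marginal_ge0 // subr_ge0 ltW // ltNge; apply/negP.
Qed.

Lemma aru_P_mem S j : j \in S -> aru_P g S j = 0.
Proof.
move=> jS; rewrite /aru_P /marginal (setUidPl _) ?sub1set //.
by case: ifP => // _; rewrite subrr mul0r min_r.
Qed.

Lemma aru_P_covered S j : 1 <= g S -> aru_P g S j = 0.
Proof. by rewrite /aru_P => ->. Qed.

Hypothesis g_sub : sf_submodular g.

Lemma marginal_antitone S T j : S \subset T -> marginal g T j <= marginal g S j.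
Proof.
move=> sST; have := g_sub (S :|: [set j]) T.
have -> : S :|: [set j] :|: T = T :|: [set j].
  by rewrite setUAC (setUidPr sST).
have : g S <= g ((S :|: [set j]) :&: T) by apply: g_mono; rewrite subsetI subsetUl.
rewrite /marginal; lra.
Qed.

Lemma gain_le_sum_marginal S A :
  g (S :|: A) - g S <= \sum_(j in A) marginal g S j.
Proof.
rewrite -big_enum -{1}[A]set_enum; elim: (enum A) => [|j s IH].
  have -> : [set x in [::]] = set0 :> {set 'I_m} by apply/setP => x; rewrite !inE.
  by rewrite setU0 subrr big_nil.
have -> : S :|: [set x in j :: s] = S :|: [set x in s] :|: [set j].
  by apply/setP => x; rewrite !inE; case: (x \in S); case: (x == j); case: (x \in s).
rewrite big_cons; have := @marginal_antitone S (S :|: [set x in s]) j (subsetUl _ _).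
rewrite /marginal /= in IH *; lra.
Qed.

Lemma sum_aru_P_ge1 S A : g S < 1 -> 1 <= g A -> 1 <= \sum_(j in A) aru_P g S j.
Proof.
move=> gS_lt1 gA_ge1; have res_gt0 : 0 < 1 - g S by rewrite subr_gt0.
have -> : \sum_(j in A) aru_P g S j =
          \sum_(j in A) Num.min 1 (marginal g S j / (1 - g S)).
  by apply: eq_bigr => j _; rewrite /aru_P ifN // -ltNge.
apply: le_trans _ (min1_sum_le (fun j => j \in A) _); last first.
  by move=> j; rewrite divr_ge0 ?marginal_ge0 ?ltW.
rewrite -mulr_suml le_min lexx ler_pdivlMr // mul1r.
have := gain_le_sum_marginal S A; have : g A <= g (S :|: A) by apply/g_mono/subsetUr.
lra.
Qed.

End SetFunction.

Section CoverTime.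
Variables (R : realType) (m : nat) (g : {set 'I_m} -> R) (p : {perm 'I_m}).
Hypotheses (g_norm : sf_normalized g) (g_mono : sf_monotone g)
  (g_full : 1 <= g [set: 'I_m]).

Let covered c := 1 <= g (sf_prefix p c).

Lemma cover_time_le : (cover_time g p <= m)%N.
Proof.
have covered_m : covered m by rewrite /covered sf_prefix_full.
by have [] := find_iota_spec covered_m.
Qed.

Lemma cover_time_gt t : (t < cover_time g p)%N = (g (sf_prefix p t) < 1).
Proof.
have covered_m : covered m by rewrite /covered sf_prefix_full.
have [_ covered_c before_c] := find_iota_spec covered_m.
rewrite ltNge; apply/idP/idP => [/before_c //|uncovered_t].
rewrite ltnNge; apply: contra uncovered_t => le_ct.
exact: le_trans covered_c (g_mono (sf_prefix_subset p le_ct)).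
Qed.

Lemma cover_time_gt0 : (0 < cover_time g p)%N.
Proof. by rewrite cover_time_gt sf_prefix0 g_norm ltr01. Qed.

Lemma sum_aru_P_le eps : 0 < eps ->
  (forall S j, 0 < marginal g S j -> eps <= marginal g S j) ->
  \sum_(t < m) aru_P g (sf_prefix p t) (p t) <= 1 + potential eps 1.
Proof.
move=> eps_gt0 granular; set c := cover_time g p.
pose a t := g (sf_prefix p t).
have a_lt1 t : (t < c)%N -> a t < 1 by rewrite cover_time_gt.
have a_step t : (t < c)%N -> a t.+1 = a t \/ eps <= a t.+1 - a t.
  move=> lt_tc; have lt_tm := leq_trans lt_tc cover_time_le.
  have inc : a t.+1 - a t = marginal g (sf_prefix p t) (p (Ordinal lt_tm)).
    by rewrite /a /marginal (sf_prefixS p (Ordinal lt_tm)).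
  have := marginal_ge0 g_mono (sf_prefix p t) (p (Ordinal lt_tm)).
  rewrite le_eqVlt => /predU1P [inc0|/granular]; last by rewrite inc; right.
  by left; apply/eqP; rewrite -subr_eq0 inc -inc0.
rewrite (bigID (fun t : 'I_m => (t < c)%N)) /= [X in _ + X]big1 ?addr0 => [|t]; last first.
  by rewrite cover_time_gt -leNgt => /aru_P_covered ->.
rewrite (big_ord_narrow cover_time_le).
have := sum_residual_ratio_le eps_gt0 a_lt1 a_step.
rewrite /a sf_prefix0 g_norm subr0; apply: le_trans; apply: ler_sum => t _.
rewrite /aru_P ifN; last by rewrite -ltNge; exact: a_lt1 (ltn_ord t).
by rewrite /marginal (sf_prefixS p (widen_ord cover_time_le t)).
Qed.

End CoverTime.

Lemma natr_sum_ltn (R : realType) (c m : nat) :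
  (c <= m)%N -> c%:R = \sum_(k < m) (k < c)%N%:R :> R.
Proof.
move=> le_cm; rewrite -[c in LHS]card_ord -sumr_const.
rewrite (big_ord_widen _ (fun _ => 1) le_cm) big_mkcond /=.
by apply: eq_bigr => k _; case: ifP.
Qed.

Section UncoveredWeight.
Variables (R : realType) (m n : nat) (f : 'I_n -> {set 'I_m} -> R) (w : 'I_n -> R).
Hypotheses (f_full : forall i, 1 <= f i [set: 'I_m]) (w_ge0 : forall i, 0 <= w i).

Definition uncovered_weight (p : {perm 'I_m}) (t : nat) : R :=
  \sum_(i < n) w i * (t < cover_time (f i) p)%N%:R.

Lemma uncovered_weight_ge0 p t : 0 <= uncovered_weight p t.
Proof. by apply: sumr_ge0 => i _; rewrite mulr_ge0. Qed.

Lemma uncovered_weight_antitone p t t' :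
  (t <= t')%N -> uncovered_weight p t' <= uncovered_weight p t.
Proof.
move=> le_tt'; apply: ler_sum => i _; rewrite ler_wpM2l // ler_nat.
by case: ltnP => // lt_t'c; rewrite (leq_ltn_trans le_tt' lt_t'c).
Qed.

Lemma uncovered_weight_m p : uncovered_weight p m = 0.
Proof. by apply: big1 => i _; rewrite ltnNge cover_time_le ?mulr0. Qed.

Lemma cost_uncovered_weight p : cost f w p = \sum_(t < m) uncovered_weight p t.
Proof.
rewrite /cost exchange_big /=; apply: eq_bigr => i _.
by rewrite (natr_sum_ltn R (cover_time_le p (f_full i))) mulr_sumr.
Qed.

End UncoveredWeight.

Section AdaptiveResidualUpdates.
Variables (R : realType) (m n : nat) (f : 'I_n -> {set 'I_m} -> R) (w : 'I_n -> R).
Hypotheses (f_norm : forall i, sf_normalized (f i)) (f_mono : forall i, sf_monotone (f i))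
  (f_sub : forall i, sf_submodular (f i)) (f_full : forall i, 1 <= f i [set: 'I_m])
  (w_ge0 : forall i, 0 <= w i).
Variables (pi sigma : {perm 'I_m}).
Hypothesis pi_greedy : aru_output f w pi.

Local Notation Rpi := (uncovered_weight f w pi).
Local Notation Rsigma := (uncovered_weight f w sigma).
Local Notation c i := (cover_time (f i) pi).
Local Notation score t := (aru_score f w (sf_prefix pi t) (pi t)).

Lemma score_ge0 (t : 'I_m) : 0 <= score t.
Proof. by apply: sumr_ge0 => i _; rewrite mulr_ge0 ?aru_P_ge0. Qed.

Lemma aru_score_le_score (t : 'I_m) j : aru_score f w (sf_prefix pi t) j <= score t.
Proof.
have [jS|] := boolP (j \in sf_prefix pi t); last exact: pi_greedy.
rewrite (_ : aru_score _ _ _ _ = 0) ?score_ge0 //.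
by apply: big1 => i _; rewrite aru_P_mem ?mulr0.
Qed.

(* Each function uncovered by [pi] at step [t] but covered by the first [k] elements
   of [sigma] contributes at least its weight to their total score ([sum_aru_P_ge1]). *)
Lemma uncovered_weight_gap (t : 'I_m) k : (k <= m)%N ->
  Rpi t - Rsigma k <= k%:R * score t.
Proof.
move=> le_km; set S := sf_prefix pi t; set A := sf_prefix sigma k.
have gap i : (t < c i)%N%:R - (k < cover_time (f i) sigma)%N%:R
               <= \sum_(j in A) aru_P (f i) S j :> R.
  have sum_ge0 : 0 <= \sum_(j in A) aru_P (f i) S j.
    by apply: sumr_ge0 => j _; apply: aru_P_ge0.
  case: ltnP => [lt_tc|]; case: ltnP => [|le_csk] /=; try lra.
  rewrite subr0; apply: sum_aru_P_ge1 => //.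
    by rewrite -cover_time_gt.
  by move: le_csk; rewrite leqNgt cover_time_gt // -leNgt.
apply: le_trans (_ : \sum_(j in A) aru_score f w S j <= _).
  rewrite -sumrB /aru_score exchange_big /=; apply: ler_sum => i _.
  by rewrite -mulrBr -mulr_sumr ler_wpM2l.
apply: le_trans (_ : \sum_(j in A) score t <= _).
  by apply: ler_sum => j _; apply: aru_score_le_score.
rewrite big_sf_prefix -(big_ord_widen _ (fun _ => score t) le_km).
by rewrite sumr_const card_ord mulr_natl.
Qed.

Definition half_time (t : nat) : nat :=
  find (fun k => 2 * Rsigma k <= Rpi t) (iota 0 m.+1).

Lemma half_time_spec t : [/\ (half_time t <= m)%N, 2 * Rsigma (half_time t) <= Rpi t &
  forall k, (k < half_time t)%N -> Rpi t < 2 * Rsigma k].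
Proof.
have halved_m : 2 * Rsigma m <= Rpi t.
  by rewrite uncovered_weight_m // mulr0 uncovered_weight_ge0.
have [le_m halved before] := @find_iota_spec (fun k => 2 * Rsigma k <= Rpi t) m halved_m.
by split => // k /before; rewrite -ltNge.
Qed.

Lemma half_time_monotone t t' : (t <= t')%N -> (half_time t <= half_time t')%N.
Proof.
move=> le_tt'; rewrite leqNgt; apply/negP => lt_h.
have [_ _ before] := half_time_spec t; have [_ halved _] := half_time_spec t'.
have := before _ lt_h; have := uncovered_weight_antitone f w_ge0 pi le_tt'; lra.
Qed.

Lemma uncovered_weight_le_half_time (t : 'I_m) : Rpi t <= 2 * (half_time t)%:R * score t.
Proof.
have [le_m halved _] := half_time_spec t.
have := uncovered_weight_gap t le_m; lra.
Qed.

Variable eps : R.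
Hypotheses (eps_gt0 : 0 < eps)
  (granular : forall i S j, 0 < marginal (f i) S j -> eps <= marginal (f i) S j).

Lemma sum_half_time_aru_P_le i :
  \sum_(t < m) (half_time t)%:R * aru_P (f i) (sf_prefix pi t) (pi t)
    <= (half_time (c i).-1)%:R * (1 + potential eps 1).
Proof.
apply: le_trans (_ : \sum_(t < m) (half_time (c i).-1)%:R *
                       aru_P (f i) (sf_prefix pi t) (pi t) <= _).
  apply: ler_sum => t _; have [lt_tc|le_ct] := ltnP t (c i).
    rewrite ler_wpM2r ?aru_P_ge0 // ler_nat half_time_monotone //.
    by rewrite -ltnS prednK // cover_time_gt0.
  by rewrite aru_P_covered ?mulr0 // leNgt -cover_time_gt // -leqNgt.
rewrite -mulr_sumr ler_wpM2l //.
exact (sum_aru_P_le pi (f_norm i) (f_mono i) (f_full i) eps_gt0 (@granular i)).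
Qed.

Lemma weight_half_time_gt_le k :
  \sum_(i < n) w i * (k < half_time (c i).-1)%N%:R <= 2 * Rsigma k.
Proof.
case: (boolP [exists i, (k < half_time (c i).-1)%N]) => [|/existsPn none]; last first.
  rewrite big1 ?mulr_ge0 ?uncovered_weight_ge0 // => i _.
  by rewrite (negbTE (none i)) mulr0.
case/existsP => i0 lt_k_i0.
have [t0 lt_k_t0 min_t0] := ex_minnP (ex_intro (fun t => k < half_time t)%N _ lt_k_i0).
have [_ _ before] := half_time_spec t0.
apply: le_trans (ltW (before k lt_k_t0)); apply: ler_sum => i _.
rewrite ler_wpM2l // ler_nat; case: (boolP (k < half_time (c i).-1)%N) => // lt_k_i.
by have := min_t0 _ lt_k_i; rewrite -ltnS prednK ?cover_time_gt0 // => ->.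
Qed.

Lemma sum_weight_half_time_le :
  \sum_(i < n) w i * (half_time (c i).-1)%:R <= 2 * cost f w sigma.
Proof.
have le_m i : (half_time (c i).-1 <= m)%N by have [] := half_time_spec (c i).-1.
under eq_bigr => i _ do rewrite (natr_sum_ltn R (le_m i)) mulr_sumr.
rewrite cost_uncovered_weight // exchange_big mulr_sumr /=.
by apply: ler_sum => k _; apply: weight_half_time_gt_le.
Qed.

Lemma aru_cost_le : cost f w pi <= 4 * (1 + potential eps 1) * cost f w sigma.
Proof.
rewrite cost_uncovered_weight //.
apply: le_trans (ler_sum _ (fun t _ => uncovered_weight_le_half_time t)) _.
have pot_ge0 : 0 <= 1 + potential eps 1 by have := potential_ge0 eps 1; lra.
rewrite (_ : \sum_(t < m) _ = 2 * \sum_(i < n) w i *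
  \sum_(t < m) (half_time t)%:R * aru_P (f i) (sf_prefix pi t) (pi t)); last first.
  rewrite mulr_sumr; under [RHS]eq_bigr do rewrite mulr_sumr mulr_sumr.
  rewrite [RHS]exchange_big; apply: eq_bigr => t _.
  by rewrite /aru_score !mulr_sumr; apply: eq_bigr => i _; ring.
apply: le_trans (_ : 2 * \sum_(i < n) w i * ((half_time (c i).-1)%:R *
                      (1 + potential eps 1)) <= _).
  by rewrite ler_wpM2l // ler_sum // => i _; rewrite ler_wpM2l // sum_half_time_aru_P_le.
under eq_bigr do rewrite mulrA.
rewrite -mulr_suml.
by have := ler_wpM2r pot_ge0 sum_weight_half_time_le; lra.
Qed.

End AdaptiveResidualUpdates.

Theorem theorem1 (R : realType) :
  exists C : R, 0 < C /\
  forall (m n : nat) (f : 'I_n -> {set 'I_m} -> R) (w : 'I_n -> R) (eps : R),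
    (forall i, sf_nonneg (f i)) ->
    (forall i, sf_normalized (f i)) ->
    (forall i, sf_monotone (f i)) ->
    (forall i, sf_submodular (f i)) ->
    (forall i, 1 <= f i (finset.setTfor 'I_m)) ->
    (forall i, 0 <= w i) ->
    (* eps = min { f^i_S(j) : f^i_S(j) > 0 } *)
    (exists i S j, 0 < marginal (f i) S j /\ marginal (f i) S j = eps) ->
    (forall i S j, 0 < marginal (f i) S j -> eps <= marginal (f i) S j) ->
    forall pi : {perm 'I_m}, aru_output f w pi ->
    forall sigma : {perm 'I_m},
      cost f w pi <= C * Num.max 1 (ln (eps^-1)) * cost f w sigma.
Proof.
exists 12; split => // m n f w eps _ f_norm f_mono f_sub f_full w_ge0.
move=> [i [S [j [marg_gt0 marg_eps]]]] granular pi pi_greedy sigma.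
have eps_gt0 : 0 < eps by rewrite -marg_eps.
have cost_ge0 : 0 <= cost f w sigma by apply: sumr_ge0 => k _; rewrite mulr_ge0.
have := aru_cost_le f_norm f_mono f_sub f_full w_ge0 sigma pi_greedy eps_gt0 granular.
move/le_trans; apply.
rewrite ler_wpM2r //; have := potential1_le eps; lra.
Qed.
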